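(* Let $m\in\mathbb{N}$, $r\in\{1,\dots,m\}$, and let $Z_r$ be the set of all vertices of $D_m$ of generation number $r$. Then every connected component of the graph $D_m\setminus Z_r$ has diameter (with respect to the metric $d_{D_m}$) strictly less than $2^r$.
   Context: Diamonds: $D_0$ is an edge; $D_i$ is obtained from $D_{i-1}$ by replacing each edge $uv$ by a quadrilateral $u,a,v,b$; $D_m$ has the shortest path metric with unit edges. Generation number $r$ consists of the vertices of $D_{m-r+1}$ not belonging to $D_{m-r}$. $D_m\setminus Z_r$ is the graph obtained by deleting the vertices in $Z_r$ and all edges incident to them. *)

From mathcomp Require Import all_boot.
Set Implicit Arguments. Unset Strict Implicit. Unset Printing Implicit Defensive.

(* Bot, Top : the two vertices of D_0.
   Mid w s  : one of the two new vertices (s = false: "a", s = true: "b")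
              inserted when the edge of D_(size w) encoded by the word w is
              replaced by the quadrilateral u,a,v,b; it belongs to
              D_(size w + 1) \ D_(size w). *)
Inductive vtx : Type :=
| Bot : vtx
| Top : vtx
| Mid : seq 'I_4 -> bool -> vtx.

(* Edges of D_i are encoded by words w : seq 'I_4 of size i (the head is
   the most recent choice).  [ends w] gives the endpoints of the edge.
   The edge uv (word w) of D_i is replaced in D_(i+1) by the four edges
   ua (0::w), av (1::w), ub (2::w), bv (3::w), with a = Mid w false,
   b = Mid w true. *)
Fixpoint ends (w : seq 'I_4) : vtx * vtx :=
  match w with
  | [::] => (Bot, Top)
  | k :: w' =>
      let: (u, v) := ends w' in
      let a := Mid w' false in
      let b := Mid w' true in
      match nat_of_ord k with
      | 0 => (u, a)
      | 1 => (a, v)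
      | 2 => (u, b)
      | _ => (b, v)
      end
  end.

Definition inV (m : nat) (x : vtx) : Prop :=
  match x with
  | Bot | Top => True
  | Mid w _ => size w < m
  end.

Definition adj (m : nat) (x y : vtx) : Prop :=
  exists w : seq 'I_4, size w = m /\ (ends w = (x, y) \/ ends w = (y, x)).

(* Z_r in D_m: vertices of D_(m-r+1) not in D_(m-r), i.e. the vertices
   created at step m-r+1 (words of size m-r). *)
Definition Z (m r : nat) (x : vtx) : Prop :=
  exists (w : seq 'I_4) (s : bool), x = Mid w s /\ size w = (m - r)%N.

Inductive walk (E : vtx -> vtx -> Prop) : vtx -> vtx -> nat -> Prop :=
| walk_nil x : walk E x x 0
| walk_cons x y z n : E x y -> walk E y z n -> walk E x z n.+1.

Definition is_dist (m : nat) (x y : vtx) (d : nat) : Prop :=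
  walk (adj m) x y d /\ forall n, walk (adj m) x y n -> d <= n.

Definition adj_del (m r : nat) (x y : vtx) : Prop :=
  adj m x y /\ ~ Z m r x /\ ~ Z m r y.

Definition same_comp_del (m r : nat) (x y : vtx) : Prop :=
  inV m x /\ inV m y /\ ~ Z m r x /\ ~ Z m r y /\
  exists n, walk (adj_del m r) x y n.

From mathcomp Require Import all_boot.
From mathcomp Require Import zify.
From Stdlib Require Import Classical.
Set Implicit Arguments. Unset Strict Implicit. Unset Printing Implicit Defensive.

(* Write k := m - r, so that Z_r consists of the two middle
   vertices Mid w0 false, Mid w0 true of every edge w0 of D_k.  Every edge
   c :: w0 of D_(k+1) spans a sub-diamond ("copy") of D_m of depth r - 1,
   and one of its poles, the anchor [kend c w0], is an endpoint of w0 (a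
   vertex of D_k) while the other pole lies in Z_r.
   1. Every edge of D_m lies in the copy of some edge of D_(k+1), and a
      vertex outside Z_r has at most one anchor; hence the anchor is
      constant along walks of D_m \ Z_r.
   2. Every vertex of a copy of depth n lies on a walk of length 2^n
      between the poles of that copy; for a vertex outside Z_r the part
      towards the Z_r-pole is non-empty, so the vertex is at distance
      < 2^(r-1) from the anchor.
   Two vertices of one component share an anchor, so they are joined by a
   walk of length < 2^(r-1) + 2^(r-1) = 2^r, and a shortest walk exists. *)

Section Walks.
Variable E : vtx -> vtx -> Prop.

Lemma walk1 x y : E x y -> walk E x y 1.
Proof. by move=> e; apply: walk_cons e (walk_nil _ _). Qed.

Lemma walk_cat x y z a b : walk E x y a -> walk E y z b -> walk E x z (a + b).
Proof.
elim=> [//|x' y' z' n e _ IH] H.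
by rewrite addSn; apply: walk_cons e (IH H).
Qed.

Lemma walk0_eq x y : walk E x y 0 -> x = y.
Proof. by move=> H; inversion H. Qed.

Hypothesis E_sym : forall x y, E x y -> E y x.

Lemma walk_rev x y n : walk E x y n -> walk E y x n.
Proof.
elim=> [x0|x' y' z' n' e _ IH]; first exact: walk_nil.
by rewrite -addn1; apply: walk_cat IH (walk1 (E_sym e)).
Qed.
End Walks.

Lemma exists_min (P : nat -> Prop) n : P n ->
  exists d, P d /\ forall k, P k -> d <= k.
Proof.
elim/ltn_ind: n => n IH hP.
case: (classic (exists k, k < n /\ P k)) => [[k [hk hPk]]|hmin].
  exact: IH hk hPk.
exists n; split=> // k hPk; rewrite leqNgt; apply/negP=> hk.
by apply: hmin; exists k.
Qed.

Lemma adj_sym m x y : adj m x y -> adj m y x.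
Proof. by case=> w [hs h]; exists w; split=> //; case: h; [right|left]. Qed.

Lemma walk_dist m x y n : walk (adj m) x y n ->
  exists d, is_dist m x y d /\ d <= n.
Proof.
move=> hw; have [d [hd hmin]] := exists_min hw.
by exists d; split; [split | exact: hmin].
Qed.

Definition i0 : 'I_4 := @Ordinal 4 0 isT.
Definition i1 : 'I_4 := @Ordinal 4 1 isT.
Definition i2 : 'I_4 := @Ordinal 4 2 isT.
Definition i3 : 'I_4 := @Ordinal 4 3 isT.

Lemma ends_cons0 w : ends (i0 :: w) = ((ends w).1, Mid w false).
Proof. by rewrite /=; case: (ends w). Qed.
Lemma ends_cons1 w : ends (i1 :: w) = (Mid w false, (ends w).2).
Proof. by rewrite /=; case: (ends w). Qed.
Lemma ends_cons2 w : ends (i2 :: w) = ((ends w).1, Mid w true).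
Proof. by rewrite /=; case: (ends w). Qed.
Lemma ends_cons3 w : ends (i3 :: w) = (Mid w true, (ends w).2).
Proof. by rewrite /=; case: (ends w). Qed.

(* The endpoint of w shared with its child edge c :: w (the anchor). *)
Definition kend (c : 'I_4) (w : seq 'I_4) : vtx :=
  if odd c then (ends w).2 else (ends w).1.

Lemma ends_cons (c : 'I_4) w : exists s, ends (c :: w) =
  if odd c then (Mid w s, (ends w).2) else ((ends w).1, Mid w s).
Proof.
case: c => [[|[|[|[|k]]]] Hk] //=; case: (ends w) => u v /=;
  [exists false | exists false | exists true | exists true] => //.
Qed.

Lemma inV_mono m m' x : m <= m' -> inV m x -> inV m' x.
Proof. case: x => //= w _ h1 h2; lia. Qed.

Lemma ends_inV w : inV (size w) (ends w).1 /\ inV (size w) (ends w).2.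
Proof.
elim: w => [|k w [IH1 IH2]] //.
have [s ->] := ends_cons k w.
have h1 := inV_mono (leqnSn (size w)) IH1.
have h2 := inV_mono (leqnSn (size w)) IH2.
by case: (odd k) => /=; split.
Qed.

Lemma kend_inV c w : inV (size w) (kend c w).
Proof. by rewrite /kend; case: (odd c); apply ends_inV. Qed.

Lemma ends_nseq0 j w : (ends (nseq j i0 ++ w)).1 = (ends w).1.
Proof. by elim: j => [//|j IH]; rewrite /= -IH; exact: (f_equal fst (ends_cons0 _)). Qed.
Lemma ends_nseq3 j w : (ends (nseq j i3 ++ w)).2 = (ends w).2.
Proof. by elim: j => [//|j IH]; rewrite /= -IH; exact: (f_equal snd (ends_cons3 _)). Qed.

Lemma incident m x : inV m x ->
  exists w, size w = m /\ (x = (ends w).1 \/ x = (ends w).2).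
Proof.
case: x => [_|_|v s /= hv].
- exists (nseq m i0 ++ [::]); rewrite size_cat size_nseq addn0.
  by split=> //; left; rewrite ends_nseq0.
- exists (nseq m i3 ++ [::]); rewrite size_cat size_nseq addn0.
  by split=> //; right; rewrite ends_nseq3.
- exists (nseq (m - size v - 1) i3 ++ (if s then i2 else i0) :: v).
  rewrite size_cat size_nseq /=; split; first lia.
  by right; rewrite ends_nseq3; case: s; rewrite ?ends_cons2 ?ends_cons0.
Qed.

(* x is a vertex of the sub-diamond of D_m spanned by the edge q. *)
Definition incopy (q : seq 'I_4) (x : vtx) : Prop :=
  x = (ends q).1 \/ x = (ends q).2 \/ exists p s, x = Mid (p ++ q) s.

Lemma ends_in_copy p q : incopy q (ends (p ++ q)).1 /\ incopy q (ends (p ++ q)).2.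
Proof.
elim: p => [|k p [IH1 IH2]]; first by split; [left | right; left].
have [s ->] := ends_cons k (p ++ q).
have hm : incopy q (Mid (p ++ q) s) by right; right; exists p, s.
by case: (odd k).
Qed.

Lemma edge_in_copy m r (w : seq 'I_4) : 1 <= r -> r <= m -> size w = m ->
  exists c w0, size w0 = m - r /\
    incopy (c :: w0) (ends w).1 /\ incopy (c :: w0) (ends w).2.
Proof.
move=> h1 h2 hs.
have hd : size (drop (r - 1) w) = m - (r - 1) by rewrite size_drop hs.
move: (cat_take_drop (r - 1) w) hd.
case: (drop (r - 1) w) => [|c w0] E hd /=; first by move: hd => /=; lia.
exists c, w0; split; first by move: hd => /=; lia.
by rewrite -E; exact: ends_in_copy.
Qed.

Definition anchored (m r : nat) (u x : vtx) : Prop :=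
  exists c w0, size w0 = m - r /\ incopy (c :: w0) x /\ u = kend c w0.

Lemma incopy_notZ m r c w0 x : size w0 = m - r -> incopy (c :: w0) x ->
  ~ Z m r x -> x = kend c w0 \/ exists p s, x = Mid (p ++ c :: w0) s.
Proof.
move=> hs hc hZ; have [s E] := ends_cons c w0.
have hZs : x <> Mid w0 s by move=> hx; apply: hZ; exists w0, s.
rewrite /kend; case: hc => [hx|[hx|h]]; last by right.
- by subst x; rewrite E in hZs *; case: (odd c) hZs => /= hZs; [case: hZs | left].
- by subst x; rewrite E in hZs *; case: (odd c) hZs => /= hZs; [left | case: hZs].
Qed.

Lemma suffix_eq (T : Type) (p q p' q' : seq T) :
  p ++ q = p' ++ q' -> size q = size q' -> q = q'.
Proof.
move=> E hs; have hp : size p = size p'.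
  by have := f_equal size E; rewrite !size_cat hs; lia.
by rewrite -(drop_size_cat q (erefl (size p))) E hp drop_size_cat.
Qed.

Lemma anchored_unique m r u u' x : ~ Z m r x ->
  anchored m r u x -> anchored m r u' x -> u = u'.
Proof.
move=> hZ [c [w0 [hs [hc ->]]]] [c' [w0' [hs' [hc' ->]]]].
case: (incopy_notZ hs hc hZ) => [E1|[p [s E1]]];
case: (incopy_notZ hs' hc' hZ) => [E2|[p' [s' E2]]].
- by rewrite -E1 -E2.
- by have := kend_inV c w0; rewrite -E1 E2 /= size_cat /=; lia.
- by have := kend_inV c' w0'; rewrite -E2 E1 /= size_cat /=; lia.
- rewrite E1 in E2; case: E2 => E2 _.
  by have [-> ->] := suffix_eq E2 (congr1 S (etrans hs (esym hs'))).
Qed.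

Lemma anchored_exists m r x : 1 <= r -> r <= m -> inV m x ->
  exists u, anchored m r u x.
Proof.
move=> h1 h2 hv; have [w [hs hx]] := incident hv.
have [c [w0 [hs0 [hc1 hc2]]]] := edge_in_copy h1 h2 hs.
by exists (kend c w0), c, w0; split=> //; split=> //; case: hx => ->.
Qed.

Lemma anchored_step m r u x y : 1 <= r -> r <= m ->
  adj_del m r x y -> anchored m r u x -> anchored m r u y.
Proof.
move=> h1 h2 [[w [hs hE]] [hZx _]] hA.
have [c [w0 [hs0 [hc1 hc2]]]] := edge_in_copy h1 h2 hs.
have [cx cy] : incopy (c :: w0) x /\ incopy (c :: w0) y.
  by case: hE => E; rewrite E /= in hc1 hc2.
have Ax : anchored m r (kend c w0) x by exists c, w0.
by rewrite (anchored_unique hZx hA Ax); exists c, w0.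
Qed.

Lemma anchored_walk m r u x y n : 1 <= r -> r <= m ->
  walk (adj_del m r) x y n -> anchored m r u x -> anchored m r u y.
Proof.
move=> h1 h2; elim=> [//|x' y' z' n' e _ IH] hA.
exact/IH/(anchored_step h1 h2 e hA).
Qed.

Lemma walk_poles m n w : size w + n = m ->
  walk (adj m) (ends w).1 (ends w).2 (2 ^ n).
Proof.
elim: n w => [|n IH] w hs.
  by apply: walk1; exists w; split; [rewrite addn0 in hs | left; case: (ends w)].
rewrite expnS mul2n -addnn.
have h0 := IH (i0 :: w); have h1 := IH (i1 :: w).
rewrite ends_cons0 ends_cons1 /= in h0 h1.
by apply: walk_cat (h0 _) (h1 _); rewrite /=; lia.
Qed.

Lemma walk_bot_mid m n w s : size w + n.+1 = m ->
  walk (adj m) (ends w).1 (Mid w s) (2 ^ n).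
Proof.
move=> hs; case: s.
- by have := walk_poles (w := i2 :: w) (n := n); rewrite ends_cons2 /=; apply; lia.
- by have := walk_poles (w := i0 :: w) (n := n); rewrite ends_cons0 /=; apply; lia.
Qed.

Lemma walk_mid_top m n w s : size w + n.+1 = m ->
  walk (adj m) (Mid w s) (ends w).2 (2 ^ n).
Proof.
move=> hs; case: s.
- by have := walk_poles (w := i3 :: w) (n := n); rewrite ends_cons3 /=; apply; lia.
- by have := walk_poles (w := i1 :: w) (n := n); rewrite ends_cons1 /=; apply; lia.
Qed.

Lemma walk_through_mid m n w p s : size w + n = m -> size (p ++ w) < m ->
  exists a b, walk (adj m) (ends w).1 (Mid (p ++ w) s) a /\
              walk (adj m) (Mid (p ++ w) s) (ends w).2 b /\ a + b = 2 ^ n.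
Proof.
elim: n w p => [|n IH] w p hs hv; first by move: hv; rewrite size_cat; lia.
rewrite expnS mul2n -addnn.
case/lastP: p hv => [|p k] hv.
  exists (2 ^ n), (2 ^ n); split; first exact: walk_bot_mid.
  by split; [exact: walk_mid_top|].
rewrite cat_rcons in hv *.
have hs' : size (k :: w) + n = m by rewrite /=; lia.
have [a [b [ha [hb hab]]]] := IH (k :: w) p hs' hv.
have [s0 E] := ends_cons k w; rewrite E in ha hb.
case: (odd k) ha hb => /= ha hb.
- exists (2 ^ n + a), b; split; last by split=> //; lia.
  exact: walk_cat (walk_bot_mid _ _) ha.
- exists a, (b + 2 ^ n); split=> //; split; last lia.
  exact: walk_cat hb (walk_mid_top _ _).
Qed.

Lemma walk_through m n w x : size w + n = m -> inV m x -> incopy w x ->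
  exists a b, walk (adj m) (ends w).1 x a /\ walk (adj m) x (ends w).2 b /\
              a + b = 2 ^ n.
Proof.
move=> hs hv [->|[->|[p [s Ex]]]].
- by exists 0, (2 ^ n); split; [exact: walk_nil | split; [exact: walk_poles|]].
- exists (2 ^ n), 0; rewrite addn0.
  by split; [exact: walk_poles | split; [exact: walk_nil|]].
- by rewrite Ex in hv *; exact: walk_through_mid.
Qed.

Lemma anchored_close m r u x : 1 <= r -> r <= m -> inV m x -> ~ Z m r x ->
  anchored m r u x -> exists a, walk (adj m) u x a /\ a < 2 ^ (r - 1).
Proof.
move=> h1 h2 hv hZ [c [w0 [hs [hc ->]]]].
have hs' : size (c :: w0) + (r - 1) = m by rewrite /=; lia.
have [a [b [ha [hb hab]]]] := walk_through hs' hv hc.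
have [s0 E] := ends_cons c w0; rewrite E /kend in ha hb *.
have hZs : x <> Mid w0 s0 by move=> hx; apply: hZ; exists w0, s0.
case: (odd c) ha hb => /= ha hb.
- exists b; split; first exact: walk_rev (@adj_sym m) _ _ _ hb.
  case: a ha hab => [ha|a _]; last lia.
  by case: hZs; rewrite -(walk0_eq ha).
- exists a; split=> //.
  case: b hb hab => [hb|b _]; last lia.
  by case: hZs; rewrite (walk0_eq hb).
Qed.

Theorem mainTheorem10 (m r : nat) (hr1 : 1 <= r) (hrm : r <= m) (x y : vtx) :
  same_comp_del m r x y ->
  exists d : nat, is_dist m x y d /\ d < 2 ^ r.
Proof.
move=> [hx [hy [hZx [hZy [n hw]]]]].
have [u ux] := anchored_exists hr1 hrm hx.
have uy := anchored_walk hr1 hrm hw ux.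
have [a [ha ha_lt]] := anchored_close hr1 hrm hx hZx ux.
have [b [hb hb_lt]] := anchored_close hr1 hrm hy hZy uy.
have hxy := walk_cat (walk_rev (@adj_sym m) ha) hb.
have [d [hd hd_le]] := walk_dist hxy.
exists d; split=> //.
have -> : 2 ^ r = 2 ^ (r - 1) + 2 ^ (r - 1).
  by rewrite addnn -mul2n -expnS; congr (2 ^ _); lia.
lia.
Qed.
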